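(* Biased Dissolution restricted to instances whose graph $G=(V,E)$ is a complete graph is solvable in $O(|V|^2)$ time (assuming constant-time arithmetic operations).
   Context: For $V'\subseteq V(G)$ let $Z(V',G):=\{(x,y)\mid x\in V',\ y\in V(G)\setminus V',\ \{x,y\}\in E(G)\}$. For positive integers $s,\Delta_s$, an $(s,\Delta_s)$-dissolution for an undirected graph $G$ is a pair $(D,z)$ with $D\subset V(G)$ and $z\colon Z(D,G)\to\{0,\dots,s\}$ such that (a) each $v'\in D$ satisfies $\sum_{(v',v)\in Z(D,G)} z(v',v)=s$, and (b) each $v\in V(G)\setminus D$ satisfies $\sum_{(v',v)\in Z(D,G)} z(v',v)=\Delta_s$. Given $\alpha\colon V(G)\to\{0,\dots,s\}$ and an integer $r_\alpha$, a tuple $(D,z,z_\alpha,R_\alpha)$ is an $r_\alpha$-biased $(s,\Delta_s)$-dissolution for $(G,\alpha)$ if $(D,z)$ is an $(s,\Delta_s)$-dissolution, $z_\alpha\colon Z(D,G)\to\{0,\dots,s\}$, $R_\alpha\subseteq V(G)\setminus D$ with $|R_\alpha|=r_\alpha$, and (c) $z_\alpha(v',v)\le z(v',v)$ for all $(v',v)\in Z(D,G)$; (d) each $v'\in D$ satisfies $\sum_{(v',v)\in Z(D,G)} z_\alpha(v',v)=\alpha(v')$; (e) each $v\in R_\alpha$ satisfies $\alpha(v)+\sum_{(v',v)\in Z(D,G)} z_\alpha(v',v)>(s+\Delta_s)/2$. Biased Dissolution: given an undirected graph $G$, positive integers $s,\Delta_s,r_\alpha$ and $\alpha\colon V(G)\to\{0,\dots,s\}$,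 decide whether an $r_\alpha$-biased $(s,\Delta_s)$-dissolution for $(G,\alpha)$ exists. *)

From mathcomp Require Import all_boot.
Set Implicit Arguments. Unset Strict Implicit. Unset Printing Implicit Defensive.

(* Biased dissolution on an undirected graph (V, E), E symmetric,       *)
(* irreflexive.  The functions z, z_alpha are given as total functions  *)
(* V -> V -> nat; only their values on Z(D,G) = {(x,y) | x in D,        *)
(* y notin D, {x,y} in E} matter, and these are bounded by s.           *)
Section Dissolution.
Variables (V : finType) (E : rel V).

Definition inZ (D : {set V}) (x y : V) : bool := [&& x \in D, y \notin D & E x y].

Definition is_dissolution (s ds : nat) (D : {set V}) (z : V -> V -> nat) : Prop :=
  [/\ D \proper [set: V],
      (forall x y, inZ D x y -> z x y <= s),
      (forall x, x \in D -> \sum_(y | inZ D x y) z x y = s) &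
      (forall y, y \notin D -> \sum_(x | inZ D x y) z x y = ds)].

Definition is_biased_dissolution (s ds r : nat) (alpha : V -> nat)
    (D : {set V}) (z za : V -> V -> nat) (R : {set V}) : Prop :=
  [/\ is_dissolution s ds D z,
      (forall x y, inZ D x y -> za x y <= s /\ za x y <= z x y),
      (R \subset ~: D /\ #|R| = r),
      (forall x, x \in D -> \sum_(y | inZ D x y) za x y = alpha x) &
      (* alpha v + sum > (s + ds)/2, stated exactly over the integers *)
      (forall y, y \in R -> s + ds < 2 * (alpha y + \sum_(x | inZ D x y) za x y))].

Definition biased_dissolution_exists (s ds r : nat) (alpha : V -> nat) : Prop :=
  exists D z za R, is_biased_dissolution s ds r alpha D z za R.

End Dissolution.

Definition complete_rel (n : nat) : rel 'I_n := fun x y => x != y.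

(* Unit-cost RAM (random access machine) with unbounded natural-number *)
(* registers; every instruction, including each arithmetic operation,   *)
(* costs one time step ("constant-time arithmetic operations").        *)
Inductive instr : Type :=
| IConst of nat & nat
| IAdd of nat & nat & nat
| ISub of nat & nat & nat      (* ISub d a b   : R[d] := R[a] - R[b] (truncated) *)
| IMul of nat & nat & nat
| IDiv of nat & nat & nat      (* IDiv d a b   : R[d] := R[a] %/ R[b] (0 if R[b]=0) *)
| ILoad of nat & nat
| IStore of nat & nat
| IJz of nat & nat
| IJmp of nat
| IHalt.

Definition memory := nat -> nat.
Definition config := (nat * memory)%type.

Definition upd (m : memory) (a v : nat) : memory :=
  fun x => if x == a then v else m x.

(* a configuration is halted if the pc points to IHalt or outside the program *)
Definition halted (P : seq instr) (c : config) : bool :=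
  match nth IHalt P c.1 with IHalt => true | _ => false end.

Definition step (P : seq instr) (c : config) : config :=
  let: (pc, m) := c in
  match nth IHalt P pc with
  | IConst d k => (pc.+1, upd m d k)
  | IAdd d a b => (pc.+1, upd m d (m a + m b))
  | ISub d a b => (pc.+1, upd m d (m a - m b))
  | IMul d a b => (pc.+1, upd m d (m a * m b))
  | IDiv d a b => (pc.+1, upd m d (m a %/ m b))
  | ILoad d a => (pc.+1, upd m d (m (m a)))
  | IStore a b => (pc.+1, upd m (m a) (m b))
  | IJz a l => (if m a == 0 then l else pc.+1, m)
  | IJmp l => (l, m)
  | IHalt => (pc, m)
  end.

(* run for t steps (halted configurations are fixed points of step) *)
Fixpoint run (P : seq instr) (t : nat) (c : config) : config :=
  if t is t'.+1 then run P t' (step P c) else c.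

(* Input encoding of an instance on the complete graph with vertex set 'I_n:
   R[1] = n, R[2] = s, R[3] = ds, R[4] = r, R[5 + i] = alpha i (i < n),
   all other registers 0; execution starts at pc = 0. *)
Definition init_config (n s ds r : nat) (alpha : 'I_n -> nat) : config :=
  (0, fun x =>
        if x == 1 then n else if x == 2 then s else if x == 3 then ds
        else if x == 4 then r
        else if (5 <= x) && (x < 5 + n) then
          (if insub (x - 5) is Some i then alpha i else 0)
        else 0).

Definition output (c : config) : nat := c.2 0.

From mathcomp Require Import all_boot zify.
Set Implicit Arguments. Unset Strict Implicit. Unset Printing Implicit Defensive.

(* On the complete graph a dissolution only constrains sizes: double counting
   gives |D| s = (n - |D|) ds, and any D of that size carries one (a
   transportation problem between D and its complement).  A vertex y of R must
   receive more than (s + ds)/2 - alpha y units out of the alpha-mass of D and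
   at most ds units in all, which bounds alpha y from below.  An exchange
   argument on the level sets {v | t < alpha v} shows that choosing D and R
   greedily along the order of decreasing alpha is optimal, so the question
   reduces to one test on that order, which a RAM evaluates in O(n^2) steps by
   computing every rank by brute force. *)

Lemma leq_sum_nat n (F G : nat -> nat) :
  (forall i, i < n -> F i <= G i) -> \sum_(0 <= i < n) F i <= \sum_(0 <= i < n) G i.
Proof. by move=> FG; rewrite !big_mkord; apply: leq_sum => i _; apply: FG. Qed.

Lemma sum_nat_sub n (F G : nat -> nat) : (forall i, i < n -> G i <= F i) ->
  \sum_(0 <= i < n) (F i - G i) = \sum_(0 <= i < n) F i - \sum_(0 <= i < n) G i.
Proof.
by move=> GF; rewrite big_nat_cond [in RHS]big_nat_cond [in X in _ - X]big_nat_cond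
  sumnB // => i /andP[/andP[_ /GF]].
Qed.

Lemma sum_nat_lt n c : \sum_(0 <= i < n) (i < c) = minn c n.
Proof. by elim: n => [|n IH]; [rewrite big_geq | rewrite big_nat_recr //= IH]; lia. Qed.

Lemma sum_nat_eq n v : \sum_(0 <= i < n) (i == v) = (v < n).
Proof. by elim: n => [|n IH]; [rewrite big_geq | rewrite big_nat_recr //= IH]; lia. Qed.

Lemma sum_nat_in n a b : \sum_(0 <= i < n) (a <= i < b) = minn b n - minn a n.
Proof. by elim: n => [|n IH]; [rewrite big_geq | rewrite big_nat_recr //= IH]; lia. Qed.

Lemma sum_nat_bool_le n (P : nat -> bool) : \sum_(0 <= i < n) P i <= n.
Proof. by rewrite -{2}(minnn n) -sum_nat_lt; apply: leq_sum_nat => i ->; case: (P i). Qed.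

Section Ranking.
Variables (n : nat) (A : nat -> nat).

Definition precedes u v : bool := (A v < A u) || ((A u == A v) && (u < v)).

Definition rank v := \sum_(0 <= u < n) precedes u v.

Definition nsat (P : pred nat) := \sum_(0 <= u < n) P (A u).

Lemma precedes_irr v : precedes v v = false.
Proof. rewrite /precedes; lia. Qed.

Lemma precedes_trans u v w : precedes u v -> precedes v w -> precedes u w.
Proof. rewrite /precedes; lia. Qed.

Lemma precedes_total u v : u != v -> precedes u v || precedes v u.
Proof. rewrite /precedes; lia. Qed.

Lemma rank_upclosed (P : pred nat) v :
  (forall a b, a <= b -> P a -> P b) -> v < n -> P (A v) = (rank v < nsat P).
Proof.
move=> Pup lt_vn; case Pv: (P (A v)); apply/esym.
- have : \sum_(0 <= u < n) (precedes u v + (u == v)) <= nsat P.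
    apply: leq_sum_nat => u _; case: eqP => [->|_]; first by rewrite precedes_irr Pv.
    rewrite addn0; case uv: (precedes u v) => //.
    by rewrite (Pup (A v)) //; move: uv; rewrite /precedes; lia.
  by rewrite big_split sum_nat_eq lt_vn /= addn1.
- rewrite ltnNge; apply/negbF; apply: leq_sum_nat => u _.
  case Pu: (P (A u)) => //=; suff: A v < A u by rewrite /precedes => ->.
  by rewrite ltnNge; apply/negP => le_uv; rewrite (Pup _ _ le_uv Pu) in Pv.
Qed.

Lemma rank_lt v : v < n -> rank v < n.
Proof.
move=> lt_vn; have := @rank_upclosed predT v (fun _ _ _ _ => erefl) lt_vn.
by rewrite /nsat sum_nat_const_nat subn0 muln1.
Qed.

Lemma rank_mono u v : u < n -> v < n -> precedes u v -> rank u < rank v.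
Proof.
move=> lt_un _ uv.
have : \sum_(0 <= w < n) (precedes w u + (w == u)) <= rank v.
  apply: leq_sum_nat => w _; case: eqP => [->|_]; first by rewrite precedes_irr uv.
  by rewrite addn0; case wu: (precedes w u) => //; rewrite (precedes_trans wu uv).
by rewrite big_split sum_nat_eq lt_un /= addn1.
Qed.

Lemma rank_inj u v : u < n -> v < n -> rank u = rank v -> u = v.
Proof.
move=> lt_un lt_vn eq_r; apply/eqP; apply: contraT => neq_uv.
by case/orP: (precedes_total neq_uv) => /rank_mono => [/(_ lt_un lt_vn)|/(_ lt_vn lt_un)];
  rewrite eq_r ltnn.
Qed.

Lemma sum_rank (F : nat -> nat) :
  \sum_(0 <= v < n) F (rank v) = \sum_(0 <= i < n) F i.
Proof.
rewrite !big_mkord; pose h (v : 'I_n) : 'I_n := Ordinal (rank_lt (ltn_ord v)).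
have h_inj : injective h.
  by move=> u v /(congr1 val) /rank_inj eq_uv; apply/val_inj/eq_uv.
by rewrite [RHS](reindex_inj h_inj).
Qed.

End Ranking.

Section Greedy.
Variables (n s ds r : nat) (A : nat -> nat).

Definition major := (s + ds) %/ 2 + 1.
Definition elig_min := major - ds.
Definition dsize := n * ds %/ (s + ds).
Definition nelig := nsat n A (fun a => elig_min <= a).

(* Rank the vertices by decreasing A.  The greedy D and R share the first
   dsize + r ranks, R being the last r of them among the eligible vertices,
   which are exactly the ranks below nelig. *)
Definition hiR := minn nelig (dsize + r).
Definition loR := hiR - r.
Definition greedyR v := (loR <= rank n A v) && (rank n A v < hiR).
Definition greedyD v := (rank n A v < dsize + r) && ~~ greedyR v.

Definition supply_of (D : nat -> bool) := \sum_(0 <= v < n) D v * A v.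
Definition demand_of (R : nat -> bool) := \sum_(0 <= v < n) R v * (major - A v).
Definition weight (D R : nat -> bool) :=
  \sum_(0 <= v < n) (D v * A v + R v * minn (A v) major).

Definition greedy_test :=
  [&& dsize * (s + ds) == n * ds, dsize + r <= n, r <= nelig &
      demand_of greedyR <= supply_of greedyD].

Lemma demand_le_supply_weight (D R : nat -> bool) :
  \sum_(0 <= v < n) R v = r ->
  (demand_of R <= supply_of D) = (r * major <= weight D R).
Proof.
move=> sumR; have -> : demand_of R = r * major - \sum_(0 <= v < n) R v * minn (A v) major.
  rewrite -sumR big_distrl /= -sumnB; last by move=> v _; case: (R v); lia.
  by apply: eq_big_nat => v _; case: (R v); lia.
by rewrite leq_subLR /weight big_split addnC.
Qed.

Lemma greedyR_elig v : v < n -> r <= nelig -> greedyR v -> elig_min <= A v.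
Proof.
move=> lt_vn r_le; rewrite (@rank_upclosed n A (fun a => elig_min <= a)) //; last lia.
by rewrite /greedyR /hiR /loR -/nelig; lia.
Qed.

Lemma sum_greedyR : dsize + r <= n -> r <= nelig -> \sum_(0 <= v < n) greedyR v = r.
Proof.
move=> kr_le r_le; rewrite /greedyR (sum_rank n A (fun i => (loR <= i) && (i < hiR))).
by rewrite sum_nat_in /loR /hiR; lia.
Qed.

Lemma sum_greedyD : dsize + r <= n -> r <= nelig -> \sum_(0 <= v < n) greedyD v = dsize.
Proof.
move=> kr_le r_le; rewrite /greedyD /greedyR.
rewrite (sum_rank n A (fun i => (i < dsize + r) && ~~ ((loR <= i) && (i < hiR)))).
have : \sum_(0 <= i < n) ((i < dsize + r) && ~~ ((loR <= i) && (i < hiR)))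
   + \sum_(0 <= i < n) ((loR <= i) && (i < hiR)) = \sum_(0 <= i < n) (i < dsize + r).
  by rewrite -big_split /=; apply: eq_big_nat => i _; rewrite /loR /hiR; lia.
by rewrite sum_nat_in sum_nat_lt /loR /hiR; lia.
Qed.

Definition layer (D R : nat -> bool) t :=
  \sum_(0 <= v < n) (D v * (t < A v) + R v * ((t < A v) && (t < major))).

Hypothesis A_le_s : forall v, v < n -> A v <= s.

Lemma weight_layers D R : weight D R = \sum_(0 <= t < s) layer D R t.
Proof.
rewrite /weight /layer exchange_big_nat; apply: eq_big_nat => v /andP[_ lt_vn].
rewrite big_split -!big_distrr /= sum_nat_lt.
under eq_big_nat => t _ do rewrite -ltn_min.
by rewrite sum_nat_lt; have := A_le_s lt_vn; lia.
Qed.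

Let above t := nsat n A (fun a => t < a).

Let above_rank t v : v < n -> (t < A v) = (rank n A v < above t).
Proof. by move=> lt_vn; apply: (@rank_upclosed n A (fun a => t < a)) => // a b /=; lia. Qed.

Lemma layer_greedy_lt t : t < major -> layer greedyD greedyR t = minn (dsize + r) (above t).
Proof.
move=> lt_tM; have above_le : above t <= n by apply: sum_nat_bool_le.
rewrite /layer; transitivity (\sum_(0 <= v < n) (rank n A v < minn (dsize + r) (above t))).
  apply: eq_big_nat => v /andP[_ lt_vn]; rewrite above_rank // lt_tM /greedyD /greedyR.
  by rewrite /loR /hiR; lia.
by rewrite (sum_rank n A (fun i => i < minn (dsize + r) (above t))) sum_nat_lt; lia.
Qed.

Lemma layer_greedy_ge t : major <= t -> r <= nelig ->
  layer greedyD greedyR t = minn (above t) loR.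
Proof.
move=> le_Mt r_le; have above_le : above t <= nelig.
  by apply: leq_sum_nat => v _; rewrite /elig_min; case: ltnP => //=; lia.
rewrite /layer; transitivity (\sum_(0 <= v < n) (rank n A v < minn (above t) loR)).
  apply: eq_big_nat => v /andP[_ lt_vn]; rewrite above_rank // (ltnNge t major) le_Mt andbF.
  by rewrite /greedyD /greedyR /loR /hiR; lia.
have : above t <= n by apply: sum_nat_bool_le.
by rewrite (sum_rank n A (fun i => i < minn (above t) loR)) sum_nat_lt; lia.
Qed.

Section Competitor.
Variables (D R : nat -> bool).
Hypotheses (sumD : \sum_(0 <= v < n) D v = dsize) (sumR : \sum_(0 <= v < n) R v = r).
Hypothesis DR_disjoint : forall v, v < n -> ~~ (D v && R v).
Hypothesis R_elig : forall v, v < n -> R v -> elig_min <= A v.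

Let r_le_nelig : r <= nelig.
Proof.
rewrite -sumR; apply: leq_sum_nat => v lt_vn.
by move: (R_elig lt_vn); case: (R v) => // ->.
Qed.

Lemma layer_le_lt t : t < major -> layer D R t <= minn (dsize + r) (above t).
Proof.
move=> lt_tM; rewrite leq_min; apply/andP; split.
  rewrite -sumD -sumR -big_split /=; apply: leq_sum_nat => v _.
  by rewrite lt_tM; case: (D v); case: (R v); case: (t < A v).
apply: leq_sum_nat => v lt_vn; move: (DR_disjoint lt_vn).
by rewrite lt_tM; case: (D v); case: (R v); case: (t < A v).
Qed.

(* From major on a layer counts only the vertices of D above t, and these,
   together with the r eligible vertices of R, are at most nelig. *)
Lemma layer_le_ge t : major <= t -> layer D R t <= minn (above t) loR.
Proof.
move=> le_Mt; have -> : layer D R t = \sum_(0 <= v < n) (D v && (t < A v)).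
  apply: eq_big_nat => v _; rewrite (ltnNge t major) le_Mt andbF.
  by case: (D v); case: (R v); case: (t < A v).
have D_le : \sum_(0 <= v < n) (D v && (t < A v)) <= dsize.
  by rewrite -sumD; apply: leq_sum_nat => v _; case: (D v); case: (t < A v).
have DR_le : \sum_(0 <= v < n) (D v && (t < A v)) + r <= nelig.
  rewrite -sumR -big_split /=; apply: leq_sum_nat => v lt_vn.
  move: (DR_disjoint lt_vn) (@R_elig v lt_vn); rewrite /elig_min.
  by case: (D v); case: (R v); case: (ltnP t (A v)) => //=; lia.
rewrite leq_min /loR /hiR; apply/andP; split; last lia.
by apply: leq_sum_nat => v _; case: (D v); case: (t < A v).
Qed.

Lemma weight_le_greedy : weight D R <= weight greedyD greedyR.
Proof.
rewrite !weight_layers; apply: leq_sum_nat => t _; case: (ltnP t major) => [lt_tM|le_Mt].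
  by rewrite layer_greedy_lt // layer_le_lt.
by rewrite (layer_greedy_ge le_Mt r_le_nelig) layer_le_ge.
Qed.

End Competitor.
End Greedy.

Section BiasedDissolution.
Variables (V : finType) (E : rel V) (s ds r : nat) (alpha : V -> nat).

Lemma sum_inZ_exchange (D : {set V}) (F : V -> V -> nat) :
  \sum_(x in D) \sum_(y | inZ E D x y) F x y =
  \sum_(y in ~: D) \sum_(x | inZ E D x y) F x y.
Proof.
have mkcond (P : {set V}) (Q : V -> pred V) (G : V -> V -> nat) :
    (forall x y, Q x y -> x \in P) ->
    \sum_(x in P) \sum_(y | Q x y) G x y = \sum_x \sum_y (if Q x y then G x y else 0).
  move=> QP; rewrite big_mkcond; apply: eq_bigr => x _; rewrite big_mkcond /=.
  by case Px: (x \in P) => //; rewrite big1 // => y _; case: ifP => // /QP; rewrite Px.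
rewrite mkcond; last by move=> x y /and3P[].
rewrite (mkcond _ (fun y x => inZ E D x y) (fun y x => F x y)); last first.
  by move=> y x /and3P[_ yD _]; rewrite in_setC.
exact: exchange_big.
Qed.

Lemma dissolution_balance D z :
  is_dissolution E s ds D z -> #|D| * s = #|~: D| * ds.
Proof.
case=> _ _ rowD colD; rewrite -!sum_nat_const.
rewrite (eq_bigr _ (fun x xD => esym (rowD x xD))) sum_inZ_exchange.
by apply: eq_bigr => y; rewrite in_setC => /colD.
Qed.

Section Biased.
Variables (D : {set V}) (z za : V -> V -> nat) (R : {set V}).
Hypothesis biased : is_biased_dissolution E s ds r alpha D z za R.

Let gain y := \sum_(x | inZ E D x y) za x y.

Let R_notin_D y : y \in R -> y \notin D.
Proof. by case: biased => _ _ [/subsetP RD _] _ _ /RD; rewrite in_setC. Qed.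

Let gain_le_ds y : y \notin D -> gain y <= ds.
Proof.
case: biased => [[_ _ _ colD] za_le _ _ _] yD; rewrite -(colD y yD).
by apply: leq_sum => x /za_le [].
Qed.

Let gain_majority y : y \in R -> major s ds - alpha y <= gain y.
Proof. by case: biased => _ _ _ _ /(_ y) maj /maj; rewrite /gain /major; lia. Qed.

Lemma biased_dissolution_elig y : y \in R -> elig_min s ds <= alpha y.
Proof.
move=> yR; have := gain_majority yR; have := gain_le_ds (R_notin_D yR).
rewrite /elig_min; lia.
Qed.

Lemma biased_dissolution_demand :
  \sum_(y in R) (major s ds - alpha y) <= \sum_(x in D) alpha x.
Proof.
case: biased => _ _ _ rowD _.
apply: (@leq_trans (\sum_(y in R) gain y)); first by apply: leq_sum => y /gain_majority.
apply: (@leq_trans (\sum_(y in ~: D) gain y)).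
  rewrite [X in X <= _]big_mkcond [X in _ <= X]big_mkcond; apply: leq_sum => y _.
  by case yR: (y \in R) => //; rewrite in_setC (R_notin_D yR).
by rewrite -sum_inZ_exchange; apply/eq_leq/eq_bigr => x /rowD.
Qed.

End Biased.
End BiasedDissolution.

Section CompleteGraph.
Variable n : nat.

Definition extn (f : 'I_n -> nat) (i : nat) : nat :=
  if insub i is Some v then f v else 0.
Definition indn (S : {set 'I_n}) (i : nat) : bool :=
  if insub i is Some v then v \in S else false.

Lemma extn_val f (v : 'I_n) : extn f v = f v.
Proof. by rewrite /extn valK. Qed.

Lemma indn_val S (v : 'I_n) : indn S v = (v \in S).
Proof. by rewrite /indn valK. Qed.

Lemma extn_le f m : (forall v, f v <= m) -> forall i, extn f i <= m.
Proof. by move=> f_le i; rewrite /extn; case: insub. Qed.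

Lemma indn_set (P : pred nat) i : i < n -> indn [set v : 'I_n | P v] i = P i.
Proof. by move=> lt_in; rewrite /indn insubT inE. Qed.

Lemma sum_indn S (F : nat -> nat) :
  \sum_(0 <= i < n) indn S i * F i = \sum_(v in S) F v.
Proof.
rewrite big_mkord [RHS]big_mkcond; apply: eq_bigr => v _.
by rewrite indn_val; case: (v \in S); rewrite ?mul1n ?mul0n.
Qed.

Lemma card_indn S : \sum_(0 <= i < n) indn S i = #|S|.
Proof.
rewrite -sum1_card -(sum_indn S (fun _ => 1)).
by apply: eq_big_nat => i _; rewrite muln1.
Qed.

Lemma sum_inZ_complete_row (D : {set 'I_n}) (F : nat -> nat -> nat) (x : 'I_n) :
  x \in D -> (forall y : 'I_n, y \in D -> F x y = 0) ->
  \sum_(y | inZ (@complete_rel n) D x y) F x y = \sum_(0 <= j < n) F x j.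
Proof.
move=> xD F0; rewrite big_mkcond big_mkord; apply: eq_bigr => y _; rewrite /inZ xD /=.
case yD: (y \in D); first by rewrite F0.
by rewrite /complete_rel; case: eqP => // eq_xy; rewrite -eq_xy xD in yD.
Qed.

Lemma sum_inZ_complete_col (D : {set 'I_n}) (F : nat -> nat -> nat) (y : 'I_n) :
  y \notin D -> (forall x : 'I_n, x \notin D -> F x y = 0) ->
  \sum_(x | inZ (@complete_rel n) D x y) F x y = \sum_(0 <= i < n) F i y.
Proof.
move=> yD F0; rewrite big_mkcond big_mkord; apply: eq_bigr => x _; rewrite /inZ yD /=.
case xD: (x \in D); last by rewrite F0 ?xD.
by rewrite /complete_rel; case: eqP => // eq_xy; move: yD; rewrite -eq_xy xD.
Qed.

Variables (s ds r : nat) (alpha : 'I_n -> nat).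
Hypotheses (s_gt0 : 0 < s) (alpha_le_s : forall v, alpha v <= s).

Lemma dsize_card (E : rel 'I_n) (D : {set 'I_n}) (z : 'I_n -> 'I_n -> nat) :
  is_dissolution E s ds D z -> dsize n s ds = #|D| /\ n * ds = #|D| * (s + ds).
Proof.
move=> /dissolution_balance balance.
have cardC : #|~: D| = n - #|D| by have := cardsC D; rewrite card_ord; lia.
have D_le : #|D| * ds <= n * ds by apply: leq_mul => //; have := max_card D; rewrite card_ord.
have eq_nds : n * ds = #|D| * (s + ds).
  by move: balance; rewrite cardC mulnBl mulnDr => ->; rewrite subnK.
by rewrite /dsize eq_nds mulnK // addn_gt0 s_gt0.
Qed.

Lemma biased_dissolution_greedy_test :
  biased_dissolution_exists (@complete_rel n) s ds r alpha ->
  greedy_test n s ds r (extn alpha).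
Proof.
move=> [D [z [za [R biased]]]].
have [diss _ [R_sub cardR] _ _] := biased.
have [k_eq nds_eq] := dsize_card diss.
have R_elig := biased_dissolution_elig biased.
have demand := biased_dissolution_demand biased.
have test_k : dsize n s ds * (s + ds) == n * ds by rewrite k_eq nds_eq.
have test_kr : dsize n s ds + r <= n.
  rewrite k_eq -cardR (leq_trans _ (eq_leq (etrans (cardsC D) (card_ord n)))) //.
  by rewrite leq_add2l subset_leq_card.
have test_r : r <= nelig n s ds (extn alpha).
  rewrite -cardR -card_indn; apply: leq_sum_nat => i _.
  rewrite /indn /extn; case: insubP => // v _ _; case vR: (v \in R) => //=.
  by rewrite R_elig.
have sumD : \sum_(0 <= i < n) indn D i = dsize n s ds by rewrite card_indn k_eq.
have sumR : \sum_(0 <= i < n) indn R i = r by rewrite card_indn.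
have disj i : i < n -> ~~ (indn D i && indn R i).
  move=> _; rewrite /indn; case: insubP => // v _ _; apply/negP => /andP[vD vR].
  by have := subsetP R_sub v vR; rewrite in_setC vD.
have elig i : i < n -> indn R i -> elig_min s ds <= extn alpha i.
  by move=> _; rewrite /indn /extn; case: insubP => // v _ _; apply: R_elig.
have opt := weight_le_greedy (fun i _ => extn_le alpha_le_s i) sumD sumR disj elig.
rewrite /greedy_test test_k test_kr test_r /=.
rewrite (demand_le_supply_weight _ _ _ _ (sum_greedyR test_kr test_r)) (leq_trans _ opt) //.
rewrite -(demand_le_supply_weight _ _ _ _ sumR) /demand_of /supply_of !sum_indn.
under eq_bigr do rewrite extn_val; under [X in _ <= X]eq_bigr do rewrite extn_val.
exact: demand.
Qed.

End CompleteGraph.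

Definition psum (w : nat -> nat) j := \sum_(0 <= i < j) w i.

Lemma psumS w j : psum w j.+1 = psum w j + w j.
Proof. by rewrite /psum big_nat_recr. Qed.

Lemma psum_le w j m : j < m -> psum w j + w j <= psum w m.
Proof.
rewrite -psumS => lt_jm; rewrite /psum [X in _ <= X](@big_cat_nat _ _ _ j.+1) //=.
exact: leq_addr.
Qed.

Lemma sum_fill (cap : nat -> nat) L m :
  \sum_(0 <= i < m) minn (cap i) (L - psum cap i) = minn L (psum cap m).
Proof.
elim: m => [|m IH]; first by rewrite big_geq // /psum big_geq //; lia.
by rewrite big_nat_recr //= IH psumS; lia.
Qed.

Definition overlap a b c d := minn b d - maxn a c.

(* Northwest-corner rule: row x owns the segment [psum rw x, psum rw x.+1) and
   column y the segment [psum cw y, psum cw y.+1) of the common total; the entry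
   is the length of their intersection. *)
Definition nw_corner (rw cw : nat -> nat) x y :=
  overlap (psum rw x) (psum rw x + rw x) (psum cw y) (psum cw y + cw y).

Lemma sum_overlap (w : nat -> nat) a b m : a <= b ->
  \sum_(0 <= j < m) overlap a b (psum w j) (psum w j + w j) = overlap a b 0 (psum w m).
Proof.
move=> le_ab; elim: m => [|m IH]; first by rewrite big_geq // /overlap /psum big_geq //; lia.
by rewrite big_nat_recr //= IH psumS /overlap; lia.
Qed.

Section NorthwestCorner.
Variables (rw cw : nat -> nat) (n : nat).

Lemma nw_corner_le_row x y : nw_corner rw cw x y <= rw x.
Proof. rewrite /nw_corner /overlap; lia. Qed.

Lemma nw_corner_le_col x y : nw_corner rw cw x y <= cw y.
Proof. rewrite /nw_corner /overlap; lia. Qed.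

Lemma nw_corner_row0 x y : rw x = 0 -> nw_corner rw cw x y = 0.
Proof. by move=> rw0; apply/eqP; rewrite -leqn0 -rw0 nw_corner_le_row. Qed.

Lemma nw_corner_col0 x y : cw y = 0 -> nw_corner rw cw x y = 0.
Proof. by move=> cw0; apply/eqP; rewrite -leqn0 -cw0 nw_corner_le_col. Qed.

Hypothesis balanced : psum rw n = psum cw n.

Lemma sum_nw_corner_row x : x < n -> \sum_(0 <= y < n) nw_corner rw cw x y = rw x.
Proof.
move=> lt_xn; rewrite /nw_corner sum_overlap ?leq_addr //.
by have := psum_le rw lt_xn; rewrite balanced /overlap; lia.
Qed.

Lemma sum_nw_corner_col y : y < n -> \sum_(0 <= x < n) nw_corner rw cw x y = cw y.
Proof.
move=> lt_yn; rewrite (eq_big_nat _ _ (F2 := fun x =>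
  overlap (psum cw y) (psum cw y + cw y) (psum rw x) (psum rw x + rw x))); last first.
  by move=> x _; rewrite /nw_corner /overlap; lia.
rewrite sum_overlap ?leq_addr //.
by have := psum_le cw lt_yn; rewrite -balanced /overlap; lia.
Qed.

End NorthwestCorner.

Section Construction.
Variables (n s ds r : nat) (alpha : 'I_n -> nat).
Hypotheses (r_gt0 : 0 < r) (alpha_le_s : forall v, alpha v <= s).
Hypothesis test : greedy_test n s ds r (extn alpha).

Local Notation A := (extn alpha).
Local Notation k := (dsize n s ds).
Local Notation inD := (greedyD n s ds r A).
Local Notation inR := (greedyR n s ds r A).
Local Notation supply := (supply_of n A inD).
Local Notation demand := (demand_of n s ds A inR).

Let test_k : k * (s + ds) = n * ds.   Proof. by case/and4P: test => /eqP. Qed.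
Let test_kr : k + r <= n.             Proof. by case/and4P: test. Qed.
Let test_r : r <= nelig n s ds A.     Proof. by case/and4P: test. Qed.
Let test_supply : demand <= supply.   Proof. by case/and4P: test. Qed.

Let A_le_s i : A i <= s. Proof. exact: extn_le. Qed.
Let sumD : \sum_(0 <= i < n) inD i = k. Proof. exact: sum_greedyD. Qed.
Let sumR : \sum_(0 <= i < n) inR i = r. Proof. exact: sum_greedyR. Qed.
Let inR_notD i : inR i -> inD i = false. Proof. by rewrite /greedyD => ->; rewrite andbF. Qed.

Let sum_notD : \sum_(0 <= i < n) ~~ inD i = n - k.
Proof.
have : \sum_(0 <= i < n) (inD i + ~~ inD i) = n.
  by rewrite -[RHS]muln1 -[n in n * 1]subn0 -sum_nat_const_nat;
    apply: eq_big_nat => i _; case: (inD i).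
by rewrite big_split /= sumD; lia.
Qed.

Let supply_le : supply <= (n - k) * ds.
Proof.
have -> : (n - k) * ds = k * s by move: test_k; rewrite mulnDr mulnBl; lia.
by rewrite -sumD big_distrl; apply: leq_sum_nat => i _; apply: leq_mul.
Qed.

(* The amounts D sends: [za] carries the alpha-part of each row of D, [zb] the
   rest s - alpha.  Every vertex of R receives its deficit [need] through [za];
   the remaining supply is spread greedily over the room left below ds. *)
Let need i := inR i * (major s ds - A i).
Let room i := (~~ inD i) * (ds - need i).
Let fill i := minn (room i) (supply - demand - psum room i).
Let rowA i := inD i * A i.
Let colA i := need i + fill i.
Let rowB i := inD i * (s - A i).
Let colB i := (~~ inD i) * (ds - colA i).

Let need_le i : i < n -> need i <= (~~ inD i) * ds.
Proof.
move=> lt_in; rewrite /need; case inRi: (inR i); last by rewrite mul0n.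
by rewrite inR_notD //; have := greedyR_elig lt_in test_r inRi; rewrite /elig_min; lia.
Qed.

Let psum_room : psum room n = (n - k) * ds - demand.
Proof.
rewrite /psum /room -sum_notD big_distrl -sum_nat_sub; last exact: need_le.
by apply: eq_big_nat => i /andP[_ /need_le]; rewrite /need; case: (inD i) => /=; lia.
Qed.

Let balancedA : psum rowA n = psum colA n.
Proof.
rewrite /psum /colA big_split /= -/(psum fill n) /psum /fill sum_fill.
rewrite -/(psum room n) psum_room; move: supply_le test_supply.
by rewrite /supply_of /demand_of /rowA /need; lia.
Qed.

Let colA_D i : inD i -> colA i = 0.
Proof.
move=> inDi; rewrite /colA /fill /room /need inDi /=.
by case inRi: (inR i); [rewrite (inR_notD inRi) in inDi | rewrite !mul0n add0n min0n].
Qed.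

Let colA_le i : i < n -> colA i <= ds.
Proof. by move=> /need_le; rewrite /colA /fill /room; case: (inD i) => /=; lia. Qed.

Let balancedB : psum rowB n = psum colB n.
Proof.
have rowB_sum : psum rowB n = k * s - supply.
  rewrite /psum /rowB (eq_big_nat _ _ (fun i _ => mulnBr (inD i) s (A i))).
  rewrite sum_nat_sub -?big_distrl ?sumD //.
  by move=> i _; rewrite leq_mul2l A_le_s orbT.
have colA_sum : \sum_(0 <= i < n) (~~ inD i) * colA i = supply.
  rewrite /supply_of -/(rowA _); transitivity (psum colA n); last by rewrite -balancedA.
  by apply: eq_big_nat => i _; case inDi: (inD i) => /=; [rewrite colA_D ?inDi | rewrite mul1n].
rewrite rowB_sum /psum /colB (eq_big_nat _ _ (fun i _ => mulnBr (~~ inD i) ds (colA i))).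
rewrite sum_nat_sub; last by move=> i /colA_le le_ds; rewrite leq_mul2l le_ds orbT.
rewrite -big_distrl /= sum_notD colA_sum; congr (_ - _).
by move: test_k; rewrite mulnDr mulnBl; lia.
Qed.

Let D := [set v : 'I_n | inD v].
Let R := [set v : 'I_n | inR v].
Let za x y := nw_corner rowA colA x y.
Let zb x y := nw_corner rowB colB x y.

Let inDE v : (v \in D) = inD v. Proof. by rewrite inE. Qed.
Let inRE v : (v \in R) = inR v. Proof. by rewrite inE. Qed.

Let z_colD x y : y \in D -> za x y + zb x y = 0.
Proof.
rewrite inDE => inDy; rewrite /za /zb nw_corner_col0 ?colA_D // nw_corner_col0 //.
by rewrite /colB inDy.
Qed.

Let z_rowN x y : x \notin D -> za x y = 0 /\ zb x y = 0.
Proof. by rewrite inDE => /negbTE notDx; rewrite /za /zb !nw_corner_row0 // /rowA /rowB notDx. Qed.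

Let R_sub : R \subset ~: D.
Proof. by apply/subsetP => v; rewrite inRE in_setC inDE => /inR_notD ->. Qed.

Let D_proper : D \proper [set: 'I_n].
Proof.
rewrite properT; apply: contraTneq r_gt0 => D_full; rewrite -sumR lt0n negbK.
apply/eqP; rewrite big_nat big1 // => i lt_in; apply/eqP; rewrite eqb0.
apply/negP => inRi; have := subsetP R_sub (Ordinal lt_in); rewrite inRE in_setC D_full inE.
by move/(_ inRi).
Qed.

Lemma greedy_test_biased_dissolution :
  biased_dissolution_exists (@complete_rel n) s ds r alpha.
Proof.
exists D, (fun x y : 'I_n => za x y + zb x y), (fun x y : 'I_n => za x y), R.
split; [split; first exact: D_proper | | split; first exact: R_sub | |].
- move=> x y /and3P[xD _ _]; have := nw_corner_le_row rowA colA x y.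
  have := nw_corner_le_row rowB colB x y; have := A_le_s x.
  by rewrite /za /zb /rowA /rowB -inDE xD; lia.
- move=> x xD; rewrite (sum_inZ_complete_row (F := fun x y => za x y + zb x y)) //; last first.
    by move=> y; apply: z_colD.
  rewrite big_split /= (sum_nw_corner_row balancedA) // (sum_nw_corner_row balancedB) //.
  rewrite /rowA /rowB -inDE xD.
  by have := A_le_s x; lia.
- move=> y yN; rewrite (sum_inZ_complete_col (F := fun x y => za x y + zb x y)) //; last first.
    by move=> x xN; have [-> ->] := @z_rowN x y xN.
  rewrite big_split /= (sum_nw_corner_col balancedA) // (sum_nw_corner_col balancedB) //.
  rewrite /colB -inDE (negbTE yN).
  by have := colA_le (ltn_ord y); lia.
- move=> x y /and3P[xD _ _]; split; last exact: leq_addr.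
  by rewrite (leq_trans (nw_corner_le_row _ _ _ _)) // /rowA -inDE xD mul1n A_le_s.
- by rewrite -card_indn -sumR; apply: eq_big_nat => i /andP[_ lt_in]; rewrite indn_set.
- move=> x xD; rewrite (sum_inZ_complete_row (F := za)) //; last first.
    by move=> y yD; have /eqP := @z_colD x y yD; rewrite addn_eq0 => /andP[/eqP].
  by rewrite (sum_nw_corner_row balancedA) // /rowA -inDE xD mul1n extn_val.
- move=> y yR; have yN : y \notin D by rewrite inDE inR_notD // -inRE.
  rewrite (sum_inZ_complete_col (F := za)) //; last by move=> x xN; case: (@z_rowN x y xN).
  rewrite (sum_nw_corner_col balancedA) // /colA /need -inRE yR mul1n -extn_val /major; lia.
Qed.

End Construction.

Arguments run : simpl never.
Arguments upd m a v x /.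
Arguments divn : simpl never.

Lemma run0 P c : run P 0 c = c.
Proof. by []. Qed.

Lemma runS P t c : run P t.+1 c = run P t (step P c).
Proof. by []. Qed.

Lemma run_add P a b c : run P (a + b) c = run P b (run P a c).
Proof. by elim: a c => // a IH c; rewrite addSn !runS IH. Qed.

Lemma run_seq P a b c c' c'' :
  run P a c = c' -> run P b c' = c'' -> run P (a + b) c = c''.
Proof. by rewrite run_add => -> ->. Qed.

Lemma run_halt P t pc m : nth IHalt P pc = IHalt -> run P t (pc, m) = (pc, m).
Proof. by move=> halt_pc; elim: t => // t IH; rewrite runS /step halt_pc. Qed.

Lemma run_jz_fall P t pc m a l :
  nth IHalt P pc = IJz a l -> 0 < m a -> run P t.+1 (pc, m) = run P t (pc.+1, m).
Proof. by move=> jz_pc ma_gt0; rewrite runS /step jz_pc; case: (m a) ma_gt0. Qed.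

Lemma run_jz_jump P t pc m a l :
  nth IHalt P pc = IJz a l -> m a = 0 -> run P t.+1 (pc, m) = run P t (l, m).
Proof. by move=> jz_pc ma0; rewrite runS /step jz_pc ma0. Qed.

Lemma run_loop P (H X K N : nat) (Inv : nat -> memory -> Prop) (Post : memory -> Prop) :
  (forall j m, j < N -> Inv j m -> exists m', run P K (H, m) = (H, m') /\ Inv j.+1 m') ->
  (forall m, Inv N m -> run P 1 (H, m) = (X, m) /\ Post m) ->
  forall m, Inv 0 m -> exists m', run P (N * K + 1) (H, m) = (X, m') /\ Post m'.
Proof.
move=> body exit.
suff loop d j m : j + d = N -> Inv j m ->
    exists m', run P (d * K + 1) (H, m) = (X, m') /\ Post m'.
  by move=> m; apply: loop.
elim: d j m => [|d IH] j m; first by rewrite addn0 => -> /exit[run_exit post]; exists m.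
move=> jdN /(body j) [|m1 [run1 inv1]]; first lia.
have [m2 [run2 post]] := IH j.+1 m1 (ltac:(lia)) inv1.
by exists m2; rewrite mulSn -addnA run_add run1 run2.
Qed.

Lemma upd_eq m a v x : x = a -> upd m a v x = v.
Proof. by move=> ->; rewrite /upd eqxx. Qed.

Lemma upd_neq m a v x : x <> a -> upd m a v x = m x.
Proof. by move=> neq_xa; rewrite /upd; case: eqP. Qed.

Lemma if_eq_true (T : Type) (x y : nat) (a b : T) : x = y -> (if x == y then a else b) = a.
Proof. by move=> ->; rewrite eqxx. Qed.

Lemma if_eq_false (T : Type) (x y : nat) (a b : T) : x <> y -> (if x == y then a else b) = b.
Proof. by case: eqP. Qed.

Ltac upd_simpl := repeat match goal with
  |- context [upd ?m ?a ?v ?x] =>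
     first [rewrite (@upd_eq m a v x); last by lia | rewrite (@upd_neq m a v x); last by lia]
  end.

Ltac if_simpl := repeat match goal with
  |- context [if ?x == ?y then _ else _] =>
     first [rewrite (@if_eq_true _ x y); last by lia | rewrite (@if_eq_false _ x y); last by lia]
  end.

Ltac mem_simpl := repeat progress (simpl; if_simpl).

Ltac run_straight := repeat rewrite runS /step /=; rewrite run0.

Lemma sub1_sub x y : 1 - (x - y) = (x <= y).
Proof. by case: leqP; lia. Qed.

Lemma sub1_addn1_sub x y : 1 - (x + 1 - y) = (x < y).
Proof. by case: ltnP; lia. Qed.

Lemma sub1_bool (b : bool) : 1 - b = ~~ b.
Proof. by case: b. Qed.

Lemma mul_bool (a b : bool) : a * b = (a && b).
Proof. by case: a; case: b. Qed.

(* Registers after the set-up phase: R[1] = n, R[5] = s, R[6] = ds, R[7] = r,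
   R[8] = 1, alpha i in R[64 + i]; R[0 .. 63] are otherwise free.  Each
   comparison [x <= y] is computed as 1 - (x - y). *)
Definition greedy_prog : seq instr := [::
  (* append s, ds, r to alpha: R[5 .. n+7] *)
  IConst 0 5;  (*   0 *)
  IAdd 0 0 1;  (*   1 *)
  IStore 0 2;  (*   2 *)
  IConst 2 1;  (*   3 *)
  IAdd 0 0 2;  (*   4 *)
  IStore 0 3;  (*   5 *)
  IAdd 0 0 2;  (*   6 *)
  IStore 0 4;  (*   7 *)
  IConst 2 66; (*   8 *)
  IAdd 2 2 1;  (*   9 *)
  IConst 3 3;  (*  10 *)
  IAdd 3 3 1;  (*  11 *)
  (* move the input block to R[64 ..], last cell first *)
  IJz 3 20;    (*  12 *)
  ILoad 4 0;   (*  13 *)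
  IStore 2 4;  (*  14 *)
  IConst 4 1;  (*  15 *)
  ISub 0 0 4;  (*  16 *)
  ISub 2 2 4;  (*  17 *)
  ISub 3 3 4;  (*  18 *)
  IJmp 12;     (*  19 *)
  (* R[10] = k, R[11] = major, R[12] = elig_min, R[15] = [k (s+ds) = n ds] [k+r <= n] *)
  IConst 18 64;(*  20 *)
  IAdd 18 18 1;(*  21 *)
  ILoad 5 18;  (*  22 *)
  IConst 8 1;  (*  23 *)
  IAdd 18 18 8;(*  24 *)
  ILoad 6 18;  (*  25 *)
  IAdd 18 18 8;(*  26 *)
  ILoad 7 18;  (*  27 *)
  IAdd 19 5 6; (*  28 *)
  IMul 20 1 6; (*  29 *)
  IDiv 10 20 19;(*  30 *)
  IMul 21 10 19;(*  31 *)
  ISub 22 21 20;(*  32 *)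
  ISub 22 8 22;(*  33 *)
  ISub 23 20 21;(*  34 *)
  ISub 23 8 23;(*  35 *)
  IMul 15 22 23;(*  36 *)
  IAdd 16 10 7;(*  37 *)
  ISub 22 16 1;(*  38 *)
  ISub 22 8 22;(*  39 *)
  IMul 15 15 22;(*  40 *)
  IConst 22 2; (*  41 *)
  IDiv 11 19 22;(*  42 *)
  IAdd 11 11 8;(*  43 *)
  ISub 12 11 6;(*  44 *)
  IConst 13 0; (*  45 *)
  IConst 24 64;(*  46 *)
  IConst 25 0; (*  47 *)
  IAdd 25 25 1;(*  48 *)
  (* R[13] = number of eligible vertices *)
  IJz 25 57;   (*  49 *)
  ILoad 26 24; (*  50 *)
  ISub 27 12 26;(*  51 *)
  ISub 27 8 27;(*  52 *)
  IAdd 13 13 27;(*  53 *)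
  IAdd 24 24 8;(*  54 *)
  ISub 25 25 8;(*  55 *)
  IJmp 49;     (*  56 *)
  (* R[15] *= [r <= R[13]], R[14] = hiR, R[17] = loR *)
  ISub 22 7 13;(*  57 *)
  ISub 22 8 22;(*  58 *)
  IMul 15 15 22;(*  59 *)
  ISub 22 13 16;(*  60 *)
  ISub 14 13 22;(*  61 *)
  ISub 17 14 7;(*  62 *)
  IConst 28 0; (*  63 *)
  IConst 29 0; (*  64 *)
  IConst 30 0; (*  65 *)
  IConst 31 64;(*  66 *)
  IConst 32 0; (*  67 *)
  IAdd 32 32 1;(*  68 *)
  (* for each v: R[28] += [v in D] alpha v, R[29] += [v in R] (major - alpha v) *)
  IJz 32 116;  (*  69 *)
  ILoad 33 31; (*  70 *)
  IConst 34 0; (*  71 *)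
  IConst 35 0; (*  72 *)
  IConst 36 64;(*  73 *)
  IConst 37 0; (*  74 *)
  IAdd 37 37 1;(*  75 *)
  (* R[34] = rank v *)
  IJz 37 96;   (*  76 *)
  ILoad 39 36; (*  77 *)
  IAdd 40 33 8;(*  78 *)
  ISub 40 40 39;(*  79 *)
  ISub 40 8 40;(*  80 *)
  ISub 41 39 33;(*  81 *)
  ISub 41 8 41;(*  82 *)
  ISub 42 33 39;(*  83 *)
  ISub 42 8 42;(*  84 *)
  IMul 41 41 42;(*  85 *)
  IAdd 42 35 8;(*  86 *)
  ISub 42 42 30;(*  87 *)
  ISub 42 8 42;(*  88 *)
  IMul 41 41 42;(*  89 *)
  IAdd 40 40 41;(*  90 *)
  IAdd 34 34 40;(*  91 *)
  IAdd 35 35 8;(*  92 *)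
  IAdd 36 36 8;(*  93 *)
  ISub 37 37 8;(*  94 *)
  IJmp 76;     (*  95 *)
  ISub 43 17 34;(*  96 *)
  ISub 43 8 43;(*  97 *)
  IAdd 44 34 8;(*  98 *)
  ISub 44 44 14;(*  99 *)
  ISub 44 8 44;(* 100 *)
  IMul 43 43 44;(* 101 *)
  IAdd 44 34 8;(* 102 *)
  ISub 44 44 16;(* 103 *)
  ISub 44 8 44;(* 104 *)
  ISub 45 8 43;(* 105 *)
  IMul 44 44 45;(* 106 *)
  IMul 45 33 44;(* 107 *)
  IAdd 28 28 45;(* 108 *)
  ISub 45 11 33;(* 109 *)
  IMul 45 45 43;(* 110 *)
  IAdd 29 29 45;(* 111 *)
  IAdd 30 30 8;(* 112 *)
  IAdd 31 31 8;(* 113 *)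
  ISub 32 32 8;(* 114 *)
  IJmp 69;     (* 115 *)
  (* R[0] = R[15] [R[29] <= R[28]] *)
  ISub 22 29 28;(* 116 *)
  ISub 22 8 22;(* 117 *)
  IMul 15 15 22;(* 118 *)
  IConst 0 0;  (* 119 *)
  IAdd 0 0 15; (* 120 *)
  IHalt        (* 121 *)
].

Section GreedyProg.
Variables (n s ds r : nat) (A : nat -> nat).

Local Notation k := (dsize n s ds).
Local Notation inD := (greedyD n s ds r A).
Local Notation inR := (greedyR n s ds r A).

Definition input_block i :=
  if i < n then A i else if i == n then s else if i == n.+1 then ds else r.

Lemma input_block_A i : i < n -> input_block i = A i.
Proof. by rewrite /input_block => ->. Qed.

Lemma input_block_s : input_block n = s.
Proof. by rewrite /input_block ltnn eqxx. Qed.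

Lemma input_block_ds : input_block n.+1 = ds.
Proof. by rewrite /input_block ltnNge leqnSn /= eqn_leq ltnn /= eqxx. Qed.

Lemma input_block_r : input_block n.+2 = r.
Proof. by rewrite /input_block !ifF //; lia. Qed.

Record copy_inv j (m : memory) : Prop := CopyInv {
  copy_n : m 1 = n;
  copy_count : m 3 = n + 3 - j;
  copy_src : m 0 = 7 + n - j;
  copy_dst : m 2 = 66 + n - j;
  copy_todo : forall i, i < n + 3 - j -> m (5 + i) = input_block i;
  copy_done : forall i, n + 3 - j <= i < n + 3 -> m (64 + i) = input_block i }.

Lemma run_setup m : m 1 = n -> m 2 = s -> m 3 = ds -> m 4 = r ->
  (forall i, i < n -> m (5 + i) = A i) ->
  exists m', run greedy_prog 12 (0, m) = (12, m') /\ copy_inv 0 m'.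
Proof.
move=> m1 m2 m3 m4 mA; eexists; split; first by run_straight; reflexivity.
split; rewrite ?subn0; mem_simpl; rewrite ?m1 //; try lia.
move=> i lt_i; have : i < n \/ i = n \/ i = n.+1 \/ i = n.+2 by lia.
case=> [lt_in|[->|[->|->]]]; mem_simpl;
  by rewrite ?input_block_s ?input_block_ds ?input_block_r ?input_block_A ?mA.
Qed.

Lemma copy_step j m : j < n + 3 -> copy_inv j m ->
  exists m', run greedy_prog 8 (12, m) = (12, m') /\ copy_inv j.+1 m'.
Proof.
move=> lt_j [m1 m3 m0 m2 low high]; eexists; split.
  rewrite (@run_jz_fall greedy_prog _ 12 _ 3 20 erefl); last by rewrite m3; lia.
  by run_straight; reflexivity.
split; mem_simpl; rewrite ?m0 ?m2 ?m3 //; try lia.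
- by move=> i lt_i; mem_simpl; apply: low; lia.
- move=> i lt_i; case: (i =P n + 2 - j) => [->|ne]; mem_simpl; last by apply: high; lia.
  by rewrite (_ : 7 + n - j = 5 + (n + 2 - j)); [apply: low | ]; lia.
Qed.

Lemma copy_exit m : copy_inv (n + 3) m ->
  run greedy_prog 1 (12, m) = (20, m) /\
  m 1 = n /\ forall i, i < n + 3 -> m (64 + i) = input_block i.
Proof.
case=> m1 m3 _ _ _ high; split; first by rewrite runS /step /= m3 subnn.
by split=> // i lt_i; apply: high; lia.
Qed.

Definition flag_k : bool := (k * (s + ds) == n * ds) && (k + r <= n).
Definition flag_r : bool := flag_k && (r <= nelig n s ds A).

Record params (f : bool) (m : memory) : Prop := Params {
  reg_n : m 1 = n;  reg_s : m 5 = s;  reg_ds : m 6 = ds;  reg_r : m 7 = r;  reg_1 : m 8 = 1;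
  reg_k : m 10 = k;  reg_major : m 11 = major s ds;  reg_elig_min : m 12 = elig_min s ds;
  reg_flag : m 15 = f;  reg_kr : m 16 = k + r;
  reg_A : forall i, i < n -> m (64 + i) = A i }.

Lemma params_upd f m d v : d \notin [:: 1; 5; 6; 7; 8; 10; 11; 12; 15; 16] -> d < 64 ->
  params f m -> params f (upd m d v).
Proof.
rewrite !inE => d_out d_lt [m1 m5 m6 m7 m8 m10 m11 m12 m15 m16 mA].
by split; upd_simpl => // i lt_in; upd_simpl; apply: mA.
Qed.

Ltac keep_params := repeat (apply: params_upd; [by [] | by [] |]).

Definition elig_inv f j (m : memory) :=
  [/\ params f m, m 13 = nsat j A (fun a => elig_min s ds <= a), m 24 = 64 + j & m 25 = n - j].

Lemma run_params m : m 1 = n -> (forall i, i < n + 3 -> m (64 + i) = input_block i) ->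
  exists m', run greedy_prog 29 (20, m) = (49, m') /\ elig_inv flag_k 0 m'.
Proof.
move=> m1 mI; eexists; split; first by run_straight; reflexivity.
have ms : m (64 + n) = s by rewrite mI ?input_block_s //; lia.
have mds : m (64 + n + 1) = ds by rewrite addn1 -addnS mI ?input_block_ds //; lia.
have mr : m (64 + n + 1 + 1) = r by rewrite !addn1 -!addnS mI ?input_block_r //; lia.
split; [split | | |]; simpl; rewrite ?m1 ?ms ?mds ?mr ?addn0 ?subn0 //.
- by rewrite !sub1_sub !mul_bool /flag_k eqn_leq.
- by move=> i lt_in; rewrite mI ?input_block_A //; lia.
- by rewrite /nsat big_geq.
Qed.

Lemma elig_step f j m : j < n -> elig_inv f j m ->
  exists m', run greedy_prog 8 (49, m) = (49, m') /\ elig_inv f j.+1 m'.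
Proof.
move=> lt_jn [mP m13 m24 m25]; eexists; split.
  rewrite (@run_jz_fall greedy_prog _ 49 _ 25 57 erefl); last by rewrite m25; lia.
  by run_straight; reflexivity.
have [m1 _ _ _ m8 _ _ m12 _ _ mA] := mP.
split; first by keep_params.
all: simpl; rewrite ?m13 ?m24 ?m25 ?m8 ?m12 ?mA // ?sub1_sub /nsat ?big_nat_recr //=; lia.
Qed.

Lemma run_elig_loop f m : elig_inv f 0 m ->
  exists m', run greedy_prog (n * 8 + 1) (49, m) = (57, m') /\
    params f m' /\ m' 13 = nelig n s ds A.
Proof.
apply: (@run_loop _ 49 57 8 n (elig_inv f)) => [j m0 lt_jn|m0 [mP m13 _ m25]].
  exact: elig_step.
by rewrite (@run_jz_jump greedy_prog _ 49 _ 25 57 erefl) // m25 subnn.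
Qed.

Record main_base v sup dem (m : memory) : Prop := MainBase {
  main_params : params flag_r m;
  reg_nelig : m 13 = nelig n s ds A;  reg_hiR : m 14 = hiR n s ds r A;
  reg_loR : m 17 = loR n s ds r A;  reg_supply : m 28 = sup;  reg_demand : m 29 = dem;
  reg_v : m 30 = v;  reg_v_addr : m 31 = 64 + v;  reg_v_count : m 32 = n - v }.

Definition main_inv v (m : memory) :=
  main_base v (supply_of v A inD) (demand_of v s ds A inR) m.

Lemma main_base_upd v sup dem m d x :
  d \notin [:: 1; 5; 6; 7; 8; 10; 11; 12; 15; 16] ->
  d \notin [:: 13; 14; 17; 28; 29; 30; 31; 32] -> d < 64 ->
  main_base v sup dem m -> main_base v sup dem (upd m d x).
Proof.
move=> d_out1; rewrite !inE => d_out2 d_lt [mP m13 m14 m17 m28 m29 m30 m31 m32].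
by split; [exact: params_upd | ..]; upd_simpl.
Qed.

Ltac keep_main_base := repeat (apply: main_base_upd; [by [] | by [] | by [] |]).

Lemma run_bounds m : params flag_k m -> m 13 = nelig n s ds A ->
  exists m', run greedy_prog 12 (57, m) = (69, m') /\ main_inv 0 m'.
Proof.
move=> mP m13; eexists; split; first by run_straight; reflexivity.
have [m1 m5 m6 m7 m8 m10 m11 m12 m15 m16 mA] := mP.
split; [split | ..]; simpl; rewrite ?m1 ?m7 ?m8 ?m13 ?m15 ?m16 ?sub1_sub ?mul_bool //.
all: rewrite /loR /hiR /supply_of /demand_of ?minnE ?big_geq; lia.
Qed.

Record rank_inv v sup dem u (m : memory) : Prop := RankInv {
  rank_base : main_base v sup dem m;
  reg_Av : m 33 = A v;  reg_rank : m 34 = \sum_(0 <= w < u) precedes A w v;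
  reg_u : m 35 = u;  reg_u_addr : m 36 = 64 + u;  reg_u_count : m 37 = n - u }.

Lemma precedesE w v :
  (A v < A w) + ((A w <= A v) && (A v <= A w)) * (w < v) = precedes A w v.
Proof. by rewrite /precedes; case: (ltngtP (A w) (A v)); case: (w < v) => //=; lia. Qed.

Lemma rank_step v sup dem u m : u < n -> rank_inv v sup dem u m ->
  exists m', run greedy_prog 20 (76, m) = (76, m') /\ rank_inv v sup dem u.+1 m'.
Proof.
move=> lt_un [mB m33 m34 m35 m36 m37]; eexists; split.
  rewrite (@run_jz_fall greedy_prog _ 76 _ 37 96 erefl); last by rewrite m37; lia.
  by run_straight; reflexivity.
have [[m1 _ _ _ m8 _ _ _ _ _ mA] _ _ _ _ _ m30 _ _] := mB.
split; first by keep_main_base.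
all: simpl; rewrite ?m33 ?m34 ?m35 ?m36 ?m37 ?m8 ?m30 ?mA //; try lia.
by rewrite !sub1_addn1_sub !sub1_sub mul_bool precedesE big_nat_recr.
Qed.

Lemma run_rank_loop v sup dem m : rank_inv v sup dem 0 m ->
  exists m', run greedy_prog (n * 20 + 1) (76, m) = (96, m') /\
    [/\ main_base v sup dem m', m' 33 = A v & m' 34 = rank n A v].
Proof.
apply: (@run_loop _ 76 96 20 n (rank_inv v sup dem)) => [j m0 lt_jn|m0 [mB m33 m34 _ _ m37]].
  exact: rank_step.
by rewrite (@run_jz_jump greedy_prog _ 76 _ 37 96 erefl) // m37 subnn.
Qed.

Lemma main_enter v m : v < n -> main_inv v m ->
  exists m', run greedy_prog 7 (69, m) = (76, m') /\
    rank_inv v (supply_of v A inD) (demand_of v s ds A inR) 0 m'.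
Proof.
move=> lt_vn mB; have [[m1 _ _ _ m8 _ _ _ _ _ mA] _ _ _ _ _ m30 m31 m32] := mB.
eexists; split.
  rewrite (@run_jz_fall greedy_prog _ 69 _ 32 116 erefl); last by rewrite m32; lia.
  by run_straight; reflexivity.
split; first by keep_main_base.
all: simpl; rewrite ?m31 ?m1 ?big_geq ?mA //; lia.
Qed.

Lemma main_leave v m : v < n ->
  main_base v (supply_of v A inD) (demand_of v s ds A inR) m ->
  m 33 = A v -> m 34 = rank n A v ->
  exists m', run greedy_prog 20 (96, m) = (69, m') /\ main_inv v.+1 m'.
Proof.
move=> lt_vn mB m33 m34.
have [mP m13 m14 m17 m28 m29 m30 m31 m32] := mB.
have [m1 _ _ _ m8 _ m11 _ _ m16 _] := mP.
eexists; split; first by run_straight; reflexivity.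
split; first by keep_params.
all: simpl; rewrite ?m8 ?m11 ?m13 ?m14 ?m16 ?m17 ?m28 ?m29 ?m30 ?m31 ?m32 ?m33 ?m34 //; try lia.
- rewrite !sub1_addn1_sub !sub1_sub !mul_bool sub1_bool mul_bool.
  by rewrite /supply_of big_nat_recr //= mulnC.
- rewrite !sub1_addn1_sub !sub1_sub !mul_bool.
  by rewrite /demand_of big_nat_recr //= mulnC.
Qed.

Lemma main_step v m : v < n -> main_inv v m ->
  exists m', run greedy_prog (7 + (n * 20 + 1) + 20) (69, m) = (69, m') /\ main_inv v.+1 m'.
Proof.
move=> lt_vn /(main_enter lt_vn) [m1 [run1 /run_rank_loop [m2 [run2 [mB m33 m34]]]]].
have [m3 [run3 inv3]] := main_leave lt_vn mB m33 m34.
exists m3; split; last exact: inv3.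
by apply: (run_seq _ run3); apply: (run_seq _ run2).
Qed.

Lemma run_main_loop m : main_inv 0 m ->
  exists m', run greedy_prog (n * (7 + (n * 20 + 1) + 20) + 1) (69, m) = (116, m') /\
    main_base n (supply_of n A inD) (demand_of n s ds A inR) m'.
Proof.
apply: (@run_loop _ 69 116 _ n main_inv) => [j m0 lt_jn|m0 mB]; first exact: main_step.
have [_ _ _ _ _ _ _ _ m32] := mB.
split; last exact: mB.
by rewrite (@run_jz_jump greedy_prog _ 69 _ 32 116 erefl) // m32 subnn.
Qed.

Lemma run_verdict sup dem m : main_base n sup dem m ->
  exists m', run greedy_prog 5 (116, m) = (121, m') /\ m' 0 = flag_r && (dem <= sup).
Proof.
case=> [[_ _ _ _ m8 _ _ _ m15 _ _] _ _ _ m28 m29 _ _ _].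
eexists; split; first by run_straight; reflexivity.
by simpl; rewrite m8 m15 m28 m29 sub1_sub mul_bool.
Qed.

Definition prog_time := 12 + ((n + 3) * 8 + 1) + 29 + (n * 8 + 1) + 12 +
  (n * (7 + (n * 20 + 1) + 20) + 1) + 5.

Lemma run_greedy_prog m : m 1 = n -> m 2 = s -> m 3 = ds -> m 4 = r ->
  (forall i, i < n -> m (5 + i) = A i) ->
  exists m', run greedy_prog prog_time (0, m) = (121, m') /\ m' 0 = greedy_test n s ds r A.
Proof.
move=> m1 m2 m3 m4 mA.
have [m5 [run1 inv1]] := run_setup m1 m2 m3 m4 mA.
have [m6 [run2 [m6_1 m6_I]]] :=
  @run_loop _ 12 20 8 (n + 3) copy_inv _ copy_step copy_exit _ inv1.
have [m7 [run3 inv3]] := run_params m6_1 m6_I.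
have [m8 [run4 [mP8 m8_13]]] := run_elig_loop inv3.
have [m9 [run5 inv5]] := run_bounds mP8 m8_13.
have [m10 [run6 inv6]] := run_main_loop inv5.
have [m11 [run7 out]] := run_verdict inv6.
exists m11; split.
  apply: (run_seq _ run7); apply: (run_seq _ run6); apply: (run_seq _ run5).
  by apply: (run_seq _ run4); apply: (run_seq _ run3); apply: (run_seq _ run2).
by rewrite out /flag_r /flag_k /greedy_test -!andbA.
Qed.

End GreedyProg.

Lemma biased_dissolution_complete n s ds r (alpha : 'I_n -> nat) :
  0 < s -> 0 < r -> (forall v, alpha v <= s) ->
  biased_dissolution_exists (@complete_rel n) s ds r alpha <->
  greedy_test n s ds r (extn alpha).
Proof.
move=> s_gt0 r_gt0 alpha_le_s; split; first exact: biased_dissolution_greedy_test.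
exact: greedy_test_biased_dissolution.
Qed.

Lemma init_config_regs n s ds r (alpha : 'I_n -> nat) (m := (init_config s ds r alpha).2) :
  [/\ m 1 = n, m 2 = s, m 3 = ds, m 4 = r & forall i, i < n -> m (5 + i) = extn alpha i].
Proof.
split=> // i lt_in; rewrite /m /init_config /=.
by rewrite (_ : 5 + i < 5 + n) ?addKn //; lia.
Qed.

Lemma prog_time_le n : prog_time n <= 200 * n ^ 2 + 200.
Proof. rewrite /prog_time; nia. Qed.

Theorem theorem5 :
  exists (P : seq instr) (c : nat),
    forall (n s ds r : nat) (alpha : 'I_n -> nat),
      0 < s -> 0 < ds -> 0 < r -> (forall v, alpha v <= s) ->
      let fin := run P (c * n ^ 2 + c) (@init_config n s ds r alpha) in
      halted P fin /\
      ((output fin = 1 /\ biased_dissolution_exists (@complete_rel n) s ds r alpha) \/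
       (output fin = 0 /\ ~ biased_dissolution_exists (@complete_rel n) s ds r alpha)).
Proof.
exists greedy_prog, 200 => n s ds r alpha s_gt0 _ r_gt0 alpha_le_s fin.
have [m1 m2 m3 m4 mA] := init_config_regs s ds r alpha.
have [m' [run_prog out]] := run_greedy_prog m1 m2 m3 m4 mA.
have -> : fin = (121, m').
  rewrite /fin -(subnKC (prog_time_le n)) run_add /init_config run_prog.
  exact: run_halt.
split=> //; rewrite /output /= out (biased_dissolution_complete ds s_gt0 r_gt0 alpha_le_s).
by case: greedy_test; [left | right].
Qed.
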